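(* Let $n,m$ be positive integers, $A_1,\dots,A_m\in\mathbb{S}_n$, $\mathcal{A}(X)=(\langle A_i,X\rangle)_{i=1}^m$, $\mathcal{A}^*(y)=\sum_i y_iA_i$, with $\mathcal{A}\mathcal{A}^*$ invertible; let $b\in\mathbb{R}^m$, $C\in\mathbb{S}_n$, $D:=\mathcal{A}^*((\mathcal{A}\mathcal{A}^* )^{-1}b)$ and $\mathcal{M}=\{S\in\mathbb{S}_n^+:\operatorname{diag}(S)=\mathbf{1}\}$. Fix $\sigma_k>0$, $y^k\in\mathbb{R}^m$, $\widetilde{X}^k\in\mathbb{S}_n$ and let $$\Phi_k(S)=\langle D,S+C\rangle-\langle\widetilde{X}^k,\mathcal{A}^*(y^k)-S-C\rangle+\tfrac{\sigma_k}{2}\|\mathcal{A}^*(y^k)-S-C\|^2 .$$ Then $S\in\mathcal{M}$ is a minimizer of $\Phi_k$ over $\mathcal{M}$ if and only if $$X:=\nabla\Phi_k(S)-\operatorname{Diag}(\nabla\Phi_k(S)S)\succeq0\quad\text{and}\quad XS=0,$$ where $\nabla\Phi_k(S)=\widetilde{X}^k-\sigma_k(\mathcal{A}^*(y^k)-S-C)+D$.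
   Context: $\mathbb{S}_n$ ($\mathbb{S}_n^+$) denotes real symmetric (positive semidefinite) $n\times n$ matrices, $\langle A,B\rangle=\mathrm{Tr}(A^{\intercal}B)$, $\|\cdot\|$ the Frobenius norm. For a square matrix $M$, $\operatorname{diag}(M)$ is the vector of its diagonal entries and $\operatorname{Diag}(M)$ the diagonal matrix with the same diagonal as $M$; $\mathbf{1}$ is the all-ones vector. *)

From HB Require Import structures.
From mathcomp Require Import all_boot all_order all_algebra.
From mathcomp Require Import reals.
Set Implicit Arguments. Unset Strict Implicit. Unset Printing Implicit Defensive.
Import Order.TTheory GRing.Theory Num.Theory.
Local Open Scope ring_scope.

Section Defs.
Variable R : realType.

Definition symmx n (A : 'M[R]_n) : Prop := A^T = A.

Definition psdmx n (A : 'M[R]_n) : Prop :=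
  symmx A /\ forall v : 'cV[R]_n, 0 <= (v^T *m A *m v) ord0 ord0.

Definition frob n (A B : 'M[R]_n) : R := \tr (A^T *m B).

Definition frob_norm2 n (A : 'M[R]_n) : R := frob A A.

Definition Aop n m (As : 'I_m -> 'M[R]_n) (X : 'M[R]_n) : 'cV[R]_m :=
  \col_i frob (As i) X.

Definition Aadj n m (As : 'I_m -> 'M[R]_n) (y : 'cV[R]_m) : 'M[R]_n :=
  \sum_(i < m) y i ord0 *: As i.

Definition AAadj n m (As : 'I_m -> 'M[R]_n) : 'M[R]_m :=
  \matrix_(i < m, j < m) (Aop As (Aadj As (delta_mx j ord0))) i ord0.

Definition Dmat n m (As : 'I_m -> 'M[R]_n) (b : 'cV[R]_m) : 'M[R]_n :=
  Aadj As (invmx (AAadj As) *m b).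

Definition Diagmx n (M : 'M[R]_n) : 'M[R]_n :=
  \matrix_(i < n, j < n) (if i == j then M i i else 0).

Definition elliptope n (S : 'M[R]_n) : Prop :=
  psdmx S /\ forall i, S i i = 1.

Definition Phi n m (As : 'I_m -> 'M[R]_n) (b : 'cV[R]_m) (C : 'M[R]_n)
  (sigma : R) (y : 'cV[R]_m) (Xt : 'M[R]_n) (S : 'M[R]_n) : R :=
  frob (Dmat As b) (S + C) - frob Xt (Aadj As y - S - C)
  + sigma / 2 * frob_norm2 (Aadj As y - S - C).

Definition gradPhi n m (As : 'I_m -> 'M[R]_n) (b : 'cV[R]_m) (C : 'M[R]_n)
  (sigma : R) (y : 'cV[R]_m) (Xt : 'M[R]_n) (S : 'M[R]_n) : 'M[R]_n :=
  Xt - sigma *: (Aadj As y - S - C) + Dmat As b.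

End Defs.

From HB Require Import structures.
From mathcomp Require Import all_boot all_order all_algebra.
From mathcomp Require Import reals ring lra.
Import Order.TTheory GRing.Theory Num.Theory.
Local Open Scope ring_scope.
Set Implicit Arguments. Unset Strict Implicit. Unset Printing Implicit Defensive.

(* The objective is a convex quadratic: Phi (S + D) - Phi S = <G, D> + sigma/2 ||D||^2
   with G = grad Phi (S), and as all matrices of the elliptope have unit diagonal,
   <G, E - S> = <X, E> for every E in it.  Sufficiency follows since <X, E> >= 0 for
   positive semidefinite X and E.  Conversely, at a minimiser the first-order condition
   gives <X, E> >= 0 on the whole elliptope, while <X, S> = 0 because diag(XS) = 0.
   Testing this along two curves through S inside the elliptope gives the rest: rotating
   one Gram vector of S towards an orthogonal direction forces XS = 0, and rescaling S
   while adding s x x^T (with an O(s^2) diagonal correction) forces x^T X x >= 0. *)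

Lemma ge0_affine_right (R : realFieldType) (a c t0 : R) : 0 < t0 ->
  (forall t, 0 < t -> t <= t0 -> 0 <= a + t * c) -> 0 <= a.
Proof.
move=> t0_gt0 hat; rewrite leNgt; apply/negP => a_lt0.
pose t := Num.min t0 (- a / (`|c| + 1)).
have c1_gt0 : 0 < `|c| + 1 by rewrite ltr_wpDl.
have t_gt0 : 0 < t by rewrite lt_min t0_gt0 divr_gt0 // oppr_gt0.
have t_bound : t * (`|c| + 1) <= - a.
  by rewrite -ler_pdivlMr // ge_min lexx orbT.
have t_le : t <= t0 by rewrite ge_min lexx.
have := hat t t_gt0 t_le.
have : t * c <= t * `|c| by rewrite ler_pM2l // ler_norm.
nra.
Qed.

Lemma eq0_of_quadratic_ge0 (R : realFieldType) (a b : R) :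
  (forall t, 0 <= t * (a + t * b)) -> a = 0.
Proof.
move=> hab; apply/eqP; rewrite eq_le -oppr_ge0; apply/andP; split.
- apply: (@ge0_affine_right _ _ b 1) => // t t_gt0 _.
  by have := hab (- t); rewrite mulNr -mulrN opprD mulNr opprK pmulr_rge0.
- apply: (@ge0_affine_right _ _ b 1) => // t t_gt0 _.
  by have := hab t; rewrite pmulr_rge0.
Qed.

Lemma ler_mul_norm (R : realDomainType) (a w W : R) : 0 <= w -> w <= W -> a * w <= `|a| * W.
Proof.
move=> w_ge0 w_le; apply: le_trans (ler_norm _) _.
by rewrite normrM (ger0_norm w_ge0) ler_wpM2l.
Qed.

Lemma rescale_gap_le (R : realFieldType) (y1 y2 : R) :
  0 <= y1 -> 3 * y1 <= 1 -> 0 <= y2 -> 3 * y2 <= 1 ->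
  (1 - y1 - y1 ^+ 2 - (1 - y2 - y2 ^+ 2)) ^+ 2 <= 4 * (y1 - y2) ^+ 2.
Proof.
move=> y1_ge0 y1_le y2_ge0 y2_le.
have -> : 1 - y1 - y1 ^+ 2 - (1 - y2 - y2 ^+ 2) = (y2 - y1) * (1 + y1 + y2) by ring.
rewrite exprMn -sqrrN opprB mulrC ler_wpM2r ?sqr_ge0 //.
have : 0 <= 1 + y1 + y2 <= 2 by apply/andP; split; lra.
by case/andP=> h0 h2; rewrite expr2; nra.
Qed.

Lemma rescale_diag_bounds (R : realFieldType) (y : R) : 0 <= y -> 3 * y <= 1 ->
  0 <= y ^+ 2 * (1 - 2 * y - y ^+ 2) <= y ^+ 2.
Proof.
move=> y_ge0 y_le; apply/andP; split; first by rewrite mulr_ge0 ?sqr_ge0 //; nra.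
by rewrite ler_piMr ?sqr_ge0 //; nra.
Qed.

Lemma sum_zero_margins (R : realFieldType) n (H : 'I_n -> 'I_n -> R) (mu : 'I_n -> R) :
  (forall i, \sum_j H i j = 0) -> (forall j, \sum_i H i j = 0) ->
  \sum_i \sum_j H i j * (mu i * mu j) = \sum_i \sum_j - H i j * ((mu i - mu j) ^+ 2 / 2).
Proof.
move=> row0 col0.
have sq_row : \sum_i \sum_j H i j * mu i ^+ 2 = 0.
  by rewrite big1 // => i _; rewrite -mulr_suml row0 mul0r.
have sq_col : \sum_i \sum_j H i j * mu j ^+ 2 = 0.
  by rewrite exchange_big big1 // => j _; rewrite -mulr_suml col0 mul0r.
have -> : \sum_i \sum_j - H i j * ((mu i - mu j) ^+ 2 / 2)
    = \sum_i \sum_j H i j * (mu i * mu j)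
      - (\sum_i \sum_j H i j * mu i ^+ 2 + \sum_i \sum_j H i j * mu j ^+ 2) / 2.
  rewrite -big_split mulr_suml -sumrB; apply: eq_bigr => i _ /=.
  by rewrite -big_split mulr_suml -sumrB; apply: eq_bigr => j _ /=; field.
by rewrite sq_row sq_col addr0 mul0r subr0.
Qed.

Section MatrixForms.
Variables (R : realType) (n : nat).
Implicit Types (A B M S : 'M[R]_n) (f g r : 'I_n -> R).

Definition mxform A f g : R := \sum_i \sum_j f i * A i j * g j.

Lemma sum_delta_mull (F : 'I_n -> R) p : \sum_j (j == p)%:R * F j = F p.
Proof.
rewrite (bigD1 p) //= eqxx mul1r big1 ?addr0 // => i /negPf->; exact: mul0r.
Qed.

Lemma frobE A B : frob A B = \sum_i \sum_j A i j * B i j.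
Proof.
rewrite /frob /mxtrace exchange_big; apply: eq_bigr => i _.
by rewrite mxE; apply: eq_bigr => j _; rewrite mxE.
Qed.

Lemma frob_ge0 A : 0 <= frob A A.
Proof.
by rewrite frobE; do 2!(apply: sumr_ge0 => ? _); rewrite -expr2 sqr_ge0.
Qed.

Lemma frobZr A B t : frob A (t *: B) = t * frob A B.
Proof. by rewrite /frob -scalemxAr mxtraceZ. Qed.

Lemma frobZl A B t : frob (t *: A) B = t * frob A B.
Proof.
rewrite !frobE mulr_sumr; apply: eq_bigr => i _; rewrite mulr_sumr.
by apply: eq_bigr => j _; rewrite mxE mulrA.
Qed.

Lemma symmxP A : symmx A <-> forall i j, A i j = A j i.
Proof.
split=> [hA i j | hA]; first by rewrite -{1}hA mxE.
by apply/matrixP => i j; rewrite mxE hA.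
Qed.

Lemma psdmxP A : psdmx A <-> symmx A /\ forall f, 0 <= mxform A f f.
Proof.
have formE (v : 'cV[R]_n) :
    (v^T *m A *m v) ord0 ord0 = mxform A (v^~ ord0) (v^~ ord0).
  rewrite /mxform mxE exchange_big; apply: eq_bigr => j _.
  by rewrite mxE mulr_suml; apply: eq_bigr => i _; rewrite !mxE.
split=> -[symA hA]; split=> //; last by move=> v; rewrite formE.
move=> f; have := hA (\col_i f i); rewrite formE.
by congr (0 <= _); apply: eq_bigr => i _; apply: eq_bigr => j _; rewrite !mxE.
Qed.

Lemma mxform_ge0 A f : psdmx A -> 0 <= mxform A f f.
Proof. by case/psdmxP=> _; apply. Qed.

Lemma eq_mxform S f f' g g' : f =1 f' -> g =1 g' -> mxform S f g = mxform S f' g'.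
Proof.
by move=> ff' gg'; apply: eq_bigr => i _; apply: eq_bigr => j _; rewrite ff' gg'.
Qed.

Lemma mxformZ A f g a b :
  mxform A (fun i => a * f i) (fun j => b * g j) = a * b * mxform A f g.
Proof.
rewrite /mxform mulr_sumr; apply: eq_bigr => i _; rewrite mulr_sumr.
by apply: eq_bigr => j _; ring.
Qed.

Lemma mxform_delta A p :
  mxform A (fun i => (i == p)%:R) (fun i => (i == p)%:R) = A p p.
Proof.
rewrite /mxform (eq_bigr (fun i => (i == p)%:R * \sum_j (j == p)%:R * A i j)).
  by rewrite !sum_delta_mull.
by move=> i _; rewrite mulr_sumr; apply: eq_bigr => j _; ring.
Qed.

Lemma mxform_add_delta A f p t : symmx A ->
  mxform A (fun i => f i + t * (i == p)%:R) (fun i => f i + t * (i == p)%:R)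
  = mxform A f f + 2 * t * (\sum_i f i * A i p) + t ^+ 2 * A p p.
Proof.
move/symmxP=> symA; rewrite /mxform.
have -> : \sum_i \sum_j (f i + t * (i == p)%:R) * A i j * (f j + t * (j == p)%:R)
  = \sum_i \sum_j f i * A i j * f j + \sum_i \sum_j (j == p)%:R * (t * f i * A i j)
    + \sum_i (i == p)%:R * (\sum_j t * A i j * f j)
    + \sum_i (i == p)%:R * (\sum_j (j == p)%:R * (t ^+ 2 * A i j)).
  rewrite -!big_split /=; apply: eq_bigr => i _.
  by rewrite !mulr_sumr -!big_split /=; apply: eq_bigr => j _; ring.
under [X in _ + X + _ + _]eq_bigr do rewrite sum_delta_mull.
under [X in _ + X]eq_bigr do rewrite sum_delta_mull.
rewrite !sum_delta_mull.
have -> : \sum_j t * A p j * f j = t * \sum_i f i * A i p.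
  by rewrite mulr_sumr; apply: eq_bigr => j _; rewrite (symA p); ring.
have -> : \sum_i t * f i * A i p = t * \sum_i f i * A i p.
  by rewrite mulr_sumr; apply: eq_bigr => i _; rewrite mulrA.
ring.
Qed.

Lemma mxform_delta_add S r i j (al be : R) :
  mxform S (fun k => (k == i)%:R + al * r k) (fun l => (l == j)%:R + be * r l)
  = S i j + be * (\sum_l S i l * r l) + al * (\sum_k r k * S k j) + al * be * mxform S r r.
Proof.
rewrite /mxform.
have -> : \sum_k \sum_l ((k == i)%:R + al * r k) * S k l * ((l == j)%:R + be * r l)
  = \sum_k (k == i)%:R * (\sum_l (l == j)%:R * S k l)
    + \sum_k (k == i)%:R * (\sum_l be * (S k l * r l))
    + \sum_k \sum_l (l == j)%:R * (al * (r k * S k l))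
    + \sum_k \sum_l al * be * (r k * S k l * r l).
  rewrite -!big_split /=; apply: eq_bigr => k _.
  by rewrite !mulr_sumr -!big_split /=; apply: eq_bigr => l _; ring.
rewrite !sum_delta_mull -mulr_sumr; congr (_ + _ + _ + _).
  by rewrite mulr_sumr; apply: eq_bigr => k _; rewrite sum_delta_mull mulrA.
rewrite mulr_sumr; apply: eq_bigr => k _; rewrite mulr_sumr.
by apply: eq_bigr => l _; ring.
Qed.

Lemma mxform_congrE M S i j : (M *m S *m M^T) i j = mxform S (M i) (M j).
Proof.
rewrite /mxform mxE exchange_big; apply: eq_bigr => l _.
by rewrite !mxE mulr_suml; apply: eq_bigr => k _.
Qed.

Lemma psd_congr M S : psdmx S -> psdmx (M *m S *m M^T).
Proof.
case=> symS formS; split=> [|v]; first by rewrite /symmx !trmx_mul trmxK symS mulmxA.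
by have := formS (M^T *m v); rewrite trmx_mul trmxK !mulmxA.
Qed.

End MatrixForms.

Section PsdFrobenius.
Variables (R : realType) (n : nat).
Implicit Types (A B : 'M[R]_n).

Lemma psd_diag_ge0 A p : psdmx A -> 0 <= A p p.
Proof. by move=> psdA; rewrite -mxform_delta mxform_ge0. Qed.

Lemma psd_diag0_row0 A p : psdmx A -> A p p = 0 -> forall j, A p j = 0.
Proof.
move=> psdA App0 j; have /symmxP symA := psdA.1.
have line_ge0 t : 0 <= A j j + 2 * t * A p j.
  have := mxform_ge0 (fun i => (i == j)%:R + t * (i == p)%:R) psdA.
  rewrite (mxform_add_delta _ _ _ psdA.1) mxform_delta sum_delta_mull.
  by rewrite App0 mulr0 addr0 (symA j p).
apply/eqP/negPn/negP => Apj_neq0.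
have := line_ge0 (- (A j j + 1) / (2 * A p j)).
have -> : 2 * (- (A j j + 1) / (2 * A p j)) * A p j = - (A j j + 1) by field.
lra.
Qed.

Lemma psd_schur B p : psdmx B -> 0 < B p p ->
  psdmx (\matrix_(i, j) (B i j - B i p * B j p / B p p)).
Proof.
move=> psdB Bpp_gt0; have /symmxP symB := psdB.1.
apply/psdmxP; split=> [|f]; first by apply/symmxP => i j; rewrite !mxE symB [B j p * _]mulrC.
pose s := \sum_i f i * B i p.
have := mxform_ge0 (fun i => f i + (- (s / B p p)) * (i == p)%:R) psdB.
rewrite (mxform_add_delta _ _ _ psdB.1) -/s.
suff -> : mxform (\matrix_(i, j) (B i j - B i p * B j p / B p p)) f f
    = mxform B f f - s * s / B p p.
  suff -> : mxform B f f + 2 * - (s / B p p) * s + (- (s / B p p)) ^+ 2 * B p p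
      = mxform B f f - s * s / B p p by [].
  by field; rewrite gt_eqF.
rewrite /s mulr_suml mulr_suml /mxform -sumrB; apply: eq_bigr => i _.
rewrite mulr_sumr mulr_suml -sumrB; apply: eq_bigr => j _.
by rewrite mxE symB; ring.
Qed.

(* Induct on the number of nonzero diagonal entries of B: removing the rank-one part
   (B e_p)(B e_p)^T / B_pp leaves a psd Schur complement whose diagonal vanishes at p
   and wherever that of B does. *)
Lemma frob_psd_ge0 A B : psdmx A -> psdmx B -> 0 <= frob A B.
Proof.
move=> psdA; have [k] := ubnP #|[set i | B i i != 0]|.
elim: k B => // k IH B ltBk psdB.
have /symmxP symB := psdB.1.
case: (pickP (fun p => B p p != 0)) => [p Bpp_neq0 | Bdiag0]; last first.
  rewrite frobE big1 // => i _; rewrite big1 // => j _.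
  by rewrite (psd_diag0_row0 psdB) ?mulr0 //; apply/eqP/negbFE/Bdiag0.
have Bpp_gt0 : 0 < B p p by rewrite lt0r Bpp_neq0 psd_diag_ge0.
pose B' := \matrix_(i, j) (B i j - B i p * B j p / B p p).
have -> : frob A B = frob A B' + mxform A (B^~ p) (B^~ p) / B p p.
  rewrite !frobE /mxform mulr_suml -big_split; apply: eq_bigr => i _.
  rewrite mulr_suml -big_split; apply: eq_bigr => j _.
  by rewrite /= mxE; field; rewrite gt_eqF.
apply: addr_ge0; last by rewrite divr_ge0 ?mxform_ge0 ?ltW.
apply: IH; last exact: psd_schur.
rewrite ltnS in ltBk; apply: leq_trans _ ltBk; apply: proper_card; apply/properP; split.
  apply/subsetP => i; rewrite !inE mxE; apply: contraNneq => Bii0.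
  by rewrite !(psd_diag0_row0 psdB Bii0) !mul0r subrr.
exists p; rewrite !inE // mxE negbK.
by rewrite mulrK ?unitfE // subrr.
Qed.

End PsdFrobenius.

Section Elliptope.
Variables (R : realType) (n : nat).
Implicit Types (S E G : 'M[R]_n).

Lemma elliptope_segment S E t : 0 <= t -> t <= 1 ->
  elliptope S -> elliptope E -> elliptope (S + t *: (E - S)).
Proof.
move=> t_ge0 t_le1 [psdS diagS] [psdE diagE].
split=> [|i]; last by rewrite !mxE diagS diagE subrr mulr0 addr0.
have /symmxP symS := psdS.1; have /symmxP symE := psdE.1.
apply/psdmxP; split=> [|f]; first by apply/symmxP => i j; rewrite !mxE symS symE.
have -> : mxform (S + t *: (E - S)) f f = (1 - t) * mxform S f f + t * mxform E f f.
  rewrite /mxform !mulr_sumr -big_split /=; apply: eq_bigr => i _.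
  by rewrite !mulr_sumr -big_split /=; apply: eq_bigr => j _; rewrite !mxE; ring.
by rewrite addr_ge0 // mulr_ge0 ?subr_ge0 ?mxform_ge0.
Qed.

Lemma frob_Diag_shift G S E : symmx S -> (forall i, S i i = 1) -> (forall i, E i i = 1) ->
  frob G (E - S) = frob (G - Diagmx (G *m S)) E.
Proof.
move=> /symmxP symS diagS diagE; rewrite !frobE.
have -> : \sum_i \sum_j (G - Diagmx (G *m S)) i j * E i j
    = \sum_i \sum_j G i j * E i j - \sum_i \sum_j (j == i)%:R * ((G *m S) i i * E i j).
  rewrite -sumrB; apply: eq_bigr => i _; rewrite -sumrB; apply: eq_bigr => j _.
  rewrite !mxE [j == i]eq_sym; by case: (i == j); rewrite /= ?mul1r ?mul0r; ring.
have -> : \sum_i \sum_j (j == i)%:R * ((G *m S) i i * E i j) = \sum_i \sum_j G i j * S i j.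
  apply: eq_bigr => i _; rewrite sum_delta_mull diagE mulr1 mxE.
  by apply: eq_bigr => j _; rewrite (symS j i).
rewrite -sumrB; apply: eq_bigr => i _; rewrite -sumrB; apply: eq_bigr => j _.
by rewrite !mxE mulrBr.
Qed.

Lemma Diag_shift_sym G S : symmx G -> symmx (G - Diagmx (G *m S)).
Proof.
move=> /symmxP symG; apply/symmxP => i j; rewrite !mxE symG.
by case: (eqVneq i j) => [->|neq_ij]; rewrite ?eqxx // eq_sym (negPf neq_ij).
Qed.

Lemma Diag_shift_mulmx_diag G S : (forall i, S i i = 1) ->
  forall a, ((G - Diagmx (G *m S)) *m S) a a = 0.
Proof.
move=> diagS a; rewrite mxE.
transitivity (\sum_j G a j * S j a - \sum_j (j == a)%:R * ((G *m S) a a * S j a)).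
  by rewrite -sumrB; apply: eq_bigr => j _; rewrite !mxE eq_sym; case: (j == a) => /=; ring.
by rewrite sum_delta_mull diagS mulr1 mxE subrr.
Qed.

End Elliptope.

Section Shear.
Variables (R : realType) (n : nat).
Implicit Types (S X : 'M[R]_n) (r : 'I_n -> R).

(* Congruence by I + e_a r^T replaces the Gram vector v_a of S by v_a + sum_k r_k v_k. *)
Definition shearmx (a : 'I_n) r : 'M[R]_n :=
  \matrix_(i, k) ((k == i)%:R + (i == a)%:R * r k).

Lemma shear_congrE S a r i j : symmx S ->
  (shearmx a r *m S *m (shearmx a r)^T) i j
  = S i j + (j == a)%:R * (\sum_l S i l * r l) + (i == a)%:R * (\sum_l S j l * r l)
    + (i == a)%:R * (j == a)%:R * mxform S r r.
Proof.
move=> /symmxP symS; rewrite mxform_congrE.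
rewrite (eq_mxform _ (f' := fun k => (k == i)%:R + (i == a)%:R * r k)
  (g' := fun k => (k == j)%:R + (j == a)%:R * r k)) => [|k|k]; rewrite ?mxE //.
rewrite mxform_delta_add; congr (_ + _ + _ + _); congr (_ * _).
by apply: eq_bigr => k _; rewrite symS mulrC.
Qed.

Lemma elliptope_shear S a r : elliptope S ->
  2 * (\sum_l S a l * r l) + mxform S r r = 0 ->
  elliptope (shearmx a r *m S *m (shearmx a r)^T).
Proof.
move=> [psdS diagS] hr; split=> [|i]; first exact: psd_congr.
rewrite shear_congrE; last exact: psdS.1.
have [->|neq_ia] := eqVneq i a.
  by rewrite diagS !mul1r; lra.
by rewrite !mul0r !addr0 diagS.
Qed.

Lemma frob_shear S a r X : symmx X -> symmx S ->
  frob X (shearmx a r *m S *m (shearmx a r)^T)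
  = frob X S + 2 * (\sum_j X a j * \sum_l S j l * r l) + mxform S r r * X a a.
Proof.
move=> /symmxP symX symS; rewrite !frobE.
pose Sr i := \sum_l S i l * r l.
have -> : \sum_i \sum_j X i j * (shearmx a r *m S *m (shearmx a r)^T) i j
    = \sum_i \sum_j X i j * S i j + \sum_i \sum_j (j == a)%:R * (X i j * Sr i)
      + \sum_i (i == a)%:R * (\sum_j X i j * Sr j)
      + \sum_i (i == a)%:R * (\sum_j (j == a)%:R * (X i j * mxform S r r)).
  rewrite -!big_split /=; apply: eq_bigr => i _.
  by rewrite !mulr_sumr -!big_split /=; apply: eq_bigr => j _; rewrite shear_congrE // /Sr; ring.
under [X in _ + X + _ + _]eq_bigr do rewrite sum_delta_mull symX.
by rewrite !sum_delta_mull /Sr; ring.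
Qed.

End Shear.

Section ShearRotation.
Variables (R : realType) (n : nat) (S : 'M[R]_n) (a : 'I_n) (u : 'I_n -> R) (tau : R).
Hypotheses (ellS : elliptope S) (Su_a0 : \sum_k S a k * u k = 0).

Local Notation q := (mxform S u u).
Local Notation D := (1 + tau ^+ 2 * q).
Local Notation kappa := (2 * tau / D).

(* For w = sum_k u_k v_k, orthogonal to v_a with |w|^2 = q, shearing by rot_dir turns v_a
   into c v_a + s w, where (c, s) = ((1 - tau^2 q) / D, 2 tau / D) parametrises the
   ellipse c^2 + q s^2 = 1. *)
Definition rot_dir l : R := kappa * u l + - (kappa * tau * q) * (l == a)%:R.

Lemma rot_denom_gt0 : 0 < D.
Proof. by rewrite ltr_pwDl // mulr_ge0 ?sqr_ge0 // mxform_ge0; case: ellS. Qed.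

Lemma mulmx_rot_dir j :
  \sum_l S j l * rot_dir l = kappa * (\sum_l S j l * u l) - kappa * tau * q * S j a.
Proof.
rewrite -(sum_delta_mull (fun l => kappa * tau * q * S j l) a) mulr_sumr -sumrB.
by apply: eq_bigr => l _; rewrite /rot_dir; ring.
Qed.

Lemma mxform_rot_dir : mxform S rot_dir rot_dir = kappa ^+ 2 * q * D.
Proof.
have [[symS _] diagS] := ellS; have /symmxP symS' := symS.
rewrite mxform_add_delta // mxformZ diagS.
have -> : \sum_i kappa * u i * S i a = kappa * (\sum_k S a k * u k).
  by rewrite mulr_sumr; apply: eq_bigr => i _; rewrite symS'; ring.
by rewrite Su_a0; ring.
Qed.

Lemma elliptope_rot : elliptope (shearmx a rot_dir *m S *m (shearmx a rot_dir)^T).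
Proof.
apply: elliptope_shear => //; rewrite mulmx_rot_dir Su_a0 ellS.2 mxform_rot_dir.
by field; rewrite gt_eqF ?rot_denom_gt0.
Qed.

Lemma frob_rot X : symmx X -> (X *m S) a a = 0 -> frob X S = 0 ->
  frob X (shearmx a rot_dir *m S *m (shearmx a rot_dir)^T)
  = 4 / D * (tau * (\sum_j X a j * (\sum_l S j l * u l) + tau * (q * X a a))).
Proof.
move=> symX; rewrite mxE => XSaa0 XS0.
rewrite frob_shear //; last exact: ellS.1.1.
rewrite XS0 mxform_rot_dir.
under eq_bigr do rewrite mulmx_rot_dir.
have -> : \sum_j X a j * (kappa * (\sum_l S j l * u l) - kappa * tau * q * S j a)
    = kappa * (\sum_j X a j * (\sum_l S j l * u l)) - kappa * tau * q * \sum_j X a j * S j a.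
  by rewrite !mulr_sumr -sumrB; apply: eq_bigr => j _; ring.
by rewrite XSaa0; field; rewrite gt_eqF ?rot_denom_gt0.
Qed.

End ShearRotation.

Section Rescale.
Variables (R : realType) (n : nat) (S : 'M[R]_n) (mu w d : 'I_n -> R) (k : R).

Definition rescalemx : 'M[R]_n :=
  \matrix_(i, j) (mu i * S i j * mu j + k * (w i * w j) + (i == j)%:R * d i).

Lemma elliptope_rescale : elliptope S -> 0 <= k -> (forall i, 0 <= d i) ->
  (forall i, mu i ^+ 2 + k * w i ^+ 2 + d i = 1) -> elliptope rescalemx.
Proof.
move=> [psdS diagS] k_ge0 d_ge0 diagE; have /symmxP symS := psdS.1.
split=> [|i]; last by rewrite mxE eqxx mul1r diagS mulr1 -(diagE i) !expr2.
apply/psdmxP; split=> [|f].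
  by apply/symmxP => i j; rewrite !mxE symS eq_sym; case: eqP => [->|_] /=; ring.
have -> : mxform rescalemx f f = mxform S (fun i => mu i * f i) (fun i => mu i * f i)
    + k * (\sum_i f i * w i) ^+ 2 + \sum_i d i * f i ^+ 2.
  have -> : (\sum_i f i * w i) ^+ 2 = \sum_i \sum_j f i * w i * (f j * w j).
    by rewrite expr2 mulr_suml; apply: eq_bigr => i _; rewrite mulr_sumr.
  have -> : \sum_i d i * f i ^+ 2 = \sum_i \sum_j (j == i)%:R * (d i * f i * f j).
    by apply: eq_bigr => i _; rewrite sum_delta_mull expr2 mulrA.
  rewrite /mxform mulr_sumr -!big_split /=; apply: eq_bigr => i _.
  rewrite mulr_sumr -!big_split /=; apply: eq_bigr => j _.
  by rewrite !mxE eq_sym; ring.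
apply: addr_ge0; first by rewrite addr_ge0 ?mxform_ge0 // mulr_ge0 ?sqr_ge0.
by apply: sumr_ge0 => i _; rewrite mulr_ge0 ?sqr_ge0.
Qed.

Lemma frob_rescale X :
  frob X rescalemx = \sum_i \sum_j X i j * S i j * (mu i * mu j)
    + k * mxform X w w + \sum_i X i i * d i.
Proof.
have -> : \sum_i X i i * d i = \sum_i \sum_j (j == i)%:R * (X i j * d i).
  by apply: eq_bigr => i _; rewrite sum_delta_mull.
rewrite frobE /mxform mulr_sumr -!big_split /=; apply: eq_bigr => i _.
rewrite mulr_sumr -!big_split /=; apply: eq_bigr => j _.
by rewrite !mxE eq_sym; ring.
Qed.

End Rescale.

Section Objective.
Variables (R : realType) (n m : nat) (As : 'I_m -> 'M[R]_n) (b : 'cV[R]_m).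
Variables (C : 'M[R]_n) (sigma : R) (y : 'cV[R]_m) (Xt : 'M[R]_n).
Implicit Types (S E Dl : 'M[R]_n).

Local Notation Phi := (Phi As b C sigma y Xt).
Local Notation gradPhi := (gradPhi As b C sigma y Xt).

Lemma Phi_shift S Dl :
  Phi (S + Dl) - Phi S = frob (gradPhi S) Dl + sigma / 2 * frob Dl Dl.
Proof.
rewrite /Phi /gradPhi /frob_norm2 !frobE !mulr_sumr.
rewrite -!sumrB -!big_split /= -sumrB; apply: eq_bigr => i _.
rewrite !mulr_sumr -!sumrB -!big_split /= -sumrB; apply: eq_bigr => j _.
by rewrite !mxE; field.
Qed.

Lemma Aadj_sym z : (forall i, symmx (As i)) -> symmx (Aadj As z).
Proof.
move=> symAs; apply/symmxP => i j; rewrite /Aadj !summxE; apply: eq_bigr => k _.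
by rewrite !mxE ((symmxP _).1 (symAs k)).
Qed.

Lemma gradPhi_sym S : (forall i, symmx (As i)) -> symmx C -> symmx Xt -> symmx S ->
  symmx (gradPhi S).
Proof.
move=> symAs /symmxP symC /symmxP symXt /symmxP symS.
have /symmxP symAy := Aadj_sym y symAs.
have /symmxP symD := Aadj_sym (invmx (AAadj As) *m b) symAs.
by apply/symmxP => i j; rewrite /gradPhi /Dmat !mxE symXt symAy symS symC symD.
Qed.

Lemma Phi_min_first_order S : elliptope S ->
  (forall S', elliptope S' -> Phi S <= Phi S') ->
  forall E, elliptope E -> 0 <= frob (gradPhi S) (E - S).
Proof.
move=> ellS Smin E ellE; set G := gradPhi S; set Dl := E - S.
apply: (@ge0_affine_right _ _ (sigma / 2 * frob Dl Dl) 1) => // t t_gt0 t_le1.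
have := Smin _ (elliptope_segment (ltW t_gt0) t_le1 ellS ellE).
rewrite -subr_ge0 Phi_shift -/G frobZr frobZl frobZr.
have -> : t * frob G Dl + sigma / 2 * (t * (t * frob Dl Dl))
    = t * (frob G Dl + t * (sigma / 2 * frob Dl Dl)) by ring.
by rewrite pmulr_rge0.
Qed.

End Objective.

Section Optimality.
Variables (R : realType) (n : nat) (S X : 'M[R]_n).
Hypotheses (ellS : elliptope S) (symX : symmx X).
Hypothesis diagXS0 : forall a, (X *m S) a a = 0.
Hypothesis XE_ge0 : forall E, elliptope E -> 0 <= frob X E.

Lemma opt_frobS : frob X S = 0.
Proof.
have /symmxP symS := ellS.1.1.
rewrite frobE big1 // => i _; rewrite -[RHS](diagXS0 i) mxE.
by apply: eq_bigr => j _; rewrite (symS i j).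
Qed.

Lemma opt_row_orth a u : \sum_k S a k * u k = 0 ->
  \sum_j X a j * (\sum_l S j l * u l) = 0.
Proof.
move=> Su_a0; apply: (eq0_of_quadratic_ge0 (b := mxform S u u * X a a)) => tau.
have := XE_ge0 (elliptope_rot tau ellS Su_a0).
rewrite frob_rot // ?opt_frobS // mulrA pmulr_rge0 // divr_gt0 //.
exact: rot_denom_gt0.
Qed.

Lemma opt_mulmx0 : X *m S = 0.
Proof.
have [[/symmxP symS _] diagS] := ellS.
apply/matrixP => a b; rewrite [RHS]mxE.
pose u k := (k == b)%:R - S a b * (k == a)%:R.
have Su l : \sum_k S l k * u k = S l b - S a b * S l a.
  transitivity (\sum_k (k == b)%:R * S l k - S a b * \sum_k (k == a)%:R * S l k).
    by rewrite mulr_sumr -sumrB; apply: eq_bigr => k _; rewrite /u; ring.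
  by rewrite !sum_delta_mull.
have := @opt_row_orth a u; rewrite Su diagS mulr1 subrr => /(_ erefl).
have := diagXS0 a; rewrite !mxE => XSaa0.
have -> : \sum_j X a j * (\sum_l S j l * u l)
    = \sum_j X a j * S j b - S a b * \sum_j X a j * S j a.
  by rewrite mulr_sumr -sumrB; apply: eq_bigr => j _; rewrite Su; ring.
by rewrite XSaa0 mulr0 subr0.
Qed.

Lemma opt_psd_perturb x s : 0 < s -> (forall i, 3 * (s * x i ^+ 2) <= 1) ->
  0 <= 2 * mxform X x x + s * (2 * \sum_i \sum_j `|X i j * S i j| * (x i ^+ 2 - x j ^+ 2) ^+ 2
                               + \sum_i `|X i i| * x i ^+ 4).
Proof.
move=> s_gt0 y_le; have [[/symmxP symS _] diagS] := ellS; have /symmxP symX' := symX.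
pose y i := s * x i ^+ 2.
(* mu and d keep the diagonal at 1 while perturbing <X, E> only by O(s^2) beyond the
   first-order term 2 s x^T X x. *)
have y_ge0 i : 0 <= y i by rewrite mulr_ge0 ?sqr_ge0 ?ltW.
pose mu i := 1 - y i - y i ^+ 2.
pose d i := y i ^+ 2 * (1 - 2 * y i - y i ^+ 2).
have ellE : elliptope (rescalemx S mu x d (2 * s)).
  apply: elliptope_rescale => // [|i|i]; first by rewrite mulr_ge0 ?ltW.
    by case/andP: (rescale_diag_bounds (y_ge0 i) (y_le i)).
  by rewrite /mu /d /y; ring.
have /matrixP XS0 := opt_mulmx0.
have := XE_ge0 ellE; rewrite frob_rescale sum_zero_margins => [|i|j]; first last.
- transitivity ((X *m S) j j); last by rewrite XS0 mxE.
  by rewrite mxE; apply: eq_bigr => i _; rewrite symX'.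
- transitivity ((X *m S) i i); last by rewrite XS0 mxE.
  by rewrite mxE; apply: eq_bigr => j _; rewrite symS.
set Q := mxform X x x; set K1 := \sum_i \sum_j `|_| * _; set K3 := \sum_i `|_| * _.
have gap_le : \sum_i \sum_j - (X i j * S i j) * ((mu i - mu j) ^+ 2 / 2) <= 2 * s ^+ 2 * K1.
  rewrite /K1 !mulr_sumr; apply: ler_sum => i _; rewrite mulr_sumr; apply: ler_sum => j _.
  rewrite [leRHS](_ : _ = `|- (X i j * S i j)| * (2 * (y i - y j) ^+ 2)); last first.
    by rewrite normrN /y; ring.
  apply: ler_mul_norm; first by rewrite divr_ge0 ?sqr_ge0.
  rewrite ler_pdivrMr // [leRHS](_ : _ = 4 * (y i - y j) ^+ 2); last by ring.
  exact: rescale_gap_le (y_ge0 i) (y_le i) (y_ge0 j) (y_le j).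
have diag_le : \sum_i X i i * d i <= s ^+ 2 * K3.
  rewrite /K3 mulr_sumr; apply: ler_sum => i _.
  rewrite [leRHS](_ : _ = `|X i i| * y i ^+ 2); last by rewrite /y; ring.
  by apply: ler_mul_norm; case/andP: (rescale_diag_bounds (y_ge0 i) (y_le i)).
move=> E_ge0; rewrite -(pmulr_rge0 _ s_gt0).
have -> : s * (2 * Q + s * (2 * K1 + K3)) = 2 * s * Q + 2 * s ^+ 2 * K1 + s ^+ 2 * K3 by ring.
lra.
Qed.

Lemma opt_psd : psdmx X.
Proof.
apply/psdmxP; split=> // x.
pose N := 1 + \sum_k x k ^+ 2.
have sq_ge0 : 0 <= \sum_k x k ^+ 2 by apply: sumr_ge0 => k _; rewrite sqr_ge0.
have N_gt0 : 0 < N by rewrite /N ltr_pwDl.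
have xi_le i : x i ^+ 2 <= N.
  rewrite /N (bigD1 i) //= addrCA lerDl addr_ge0 //.
  by apply: sumr_ge0 => k _; rewrite sqr_ge0.
suff : 0 <= 2 * mxform X x x by rewrite pmulr_rge0.
apply: (@ge0_affine_right _ _ _ (3 * N)^-1) => [|s s_gt0 s_le].
  by rewrite invr_gt0 mulr_gt0.
apply: opt_psd_perturb => // i.
have : 3 * N * s <= 1 by rewrite -ler_pdivlMl ?mulr_gt0 // mulr1.
have := xi_le i; have := ltW s_gt0; nra.
Qed.

End Optimality.

Theorem lemma3p2 (R : realType) (n m : nat) (hn : (0 < n)%N) (hm : (0 < m)%N)
  (As : 'I_m -> 'M[R]_n) (hAs : forall i, symmx (As i))
  (hinv : AAadj As \in unitmx)
  (b : 'cV[R]_m) (C : 'M[R]_n) (hC : symmx C)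
  (sigma : R) (hsigma : 0 < sigma) (y : 'cV[R]_m)
  (Xt : 'M[R]_n) (hXt : symmx Xt)
  (S : 'M[R]_n) (hS : elliptope S) :
  (forall S' : 'M[R]_n, elliptope S' ->
     Phi As b C sigma y Xt S <= Phi As b C sigma y Xt S')
  <->
  (let G := gradPhi As b C sigma y Xt S in
   let X := G - Diagmx (G *m S) in
   psdmx X /\ X *m S = 0).
Proof.
have [[symS _] diagS] := hS.
set G := gradPhi As b C sigma y Xt S; set X := G - Diagmx (G *m S).
have symX : symmx X by apply/Diag_shift_sym/gradPhi_sym.
have shift E : elliptope E -> frob G (E - S) = frob X E.
  by case=> _ diagE; apply: frob_Diag_shift.
split=> [Smin | [psdX XS0] S' ellS'].
  have XE_ge0 E : elliptope E -> 0 <= frob X E.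
    by move=> ellE; rewrite -shift // Phi_min_first_order.
  have diagXS0 := Diag_shift_mulmx_diag G diagS.
  by split; [apply: (opt_psd hS) | apply: (opt_mulmx0 hS)].
rewrite -subr_ge0 -[S'](addrNK S) [S' - S + S]addrC Phi_shift -/G shift ?addrNK //.
apply: addr_ge0; first exact: frob_psd_ge0 ellS'.1.
by rewrite mulr_ge0 ?frob_ge0 ?divr_ge0 ?ltW.
Qed.
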